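(* Let $V$ be a finite nonempty set and $f:\{0,1\}^V\to\{0,1\}^V$ a Boolean network. If no subnetwork of $f$ (including $f$ itself) is even-self-dual or odd-self-dual, then the conjugate $\tilde f$ of $f$ is a bijection.
   Context: For $x,y\in\{0,1\}^V$, $x\oplus y$ is componentwise addition mod 2, $1$ denotes the all-ones point, and $\|x\|$ is the number of components of $x$ equal to $1$; $x$ is even (odd) if $\|x\|$ is even (odd). The conjugate of $f$ is $\tilde f(x)=f(x)\oplus x$. For a nonempty $I\subseteq V$ and $z\in\{0,1\}^{V\setminus I}$, the subnetwork of $f$ induced by $z$ is the network $h:\{0,1\}^I\to\{0,1\}^I$ defined by $h(x|_I)=f(x)|_I$ for all $x\in\{0,1\}^V$ whose restriction to $V\setminus I$ equals $z$ (for $I=V$ this gives $f$ itself, so $f$ is a subnetwork of itself). A network $g$ on a set $W$ is self-dual if $g(x\oplus 1)=g(x)\oplus 1$ for all $x$; it is even if $\tilde g(\{0,1\}^W)$ is exactly the set of even points of $\{0,1\}^W$, and odd if $\tilde g(\{0,1\}^W)$ is exactly the set of odd points. It is even-self-dual (odd-self-dual) if it is both even (odd) and self-dual. *)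

From mathcomp Require Import all_boot.
Set Implicit Arguments. Unset Strict Implicit. Unset Printing Implicit Defensive.

Definition point (W : finType) := {ffun W -> bool}.
Definition network (W : finType) := point W -> point W.

Definition pxor (W : finType) (x y : point W) : point W :=
  [ffun w => xorb (x w) (y w)].
Definition ones (W : finType) : point W := [ffun _ => true].
Definition weight (W : finType) (x : point W) : nat := #|[set w | x w]|.
Definition even_point (W : finType) (x : point W) : bool := ~~ odd (weight x).
Definition odd_point (W : finType) (x : point W) : bool := odd (weight x).

Definition conjugate (W : finType) (f : network W) : network W :=
  fun x => pxor (f x) x.

Definition self_dual (W : finType) (g : network W) : Prop :=
  forall x, g (pxor x (ones W)) = pxor (g x) (ones W).

Definition even_net (W : finType) (g : network W) : Prop :=
  forall p : point W, (exists x, conjugate g x = p) <-> even_point p.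
Definition odd_net (W : finType) (g : network W) : Prop :=
  forall p : point W, (exists x, conjugate g x = p) <-> odd_point p.

Definition even_self_dual (W : finType) (g : network W) : Prop :=
  even_net g /\ self_dual g.
Definition odd_self_dual (W : finType) (g : network W) : Prop :=
  odd_net g /\ self_dual g.

(* The index set I is the finite subtype {v : V | v \in I};
   the fixed values z on V \ I are given as the restriction of a point y of
   {0,1}^V to V \ I (only those values of y are used). *)
Definition extend (V : finType) (I : {set V}) (y : point V)
  (u : point {v : V | v \in I}) : point V :=
  [ffun v => if insub v is Some w then u w else y v].

Definition subnetwork (V : finType) (f : network V) (I : {set V}) (y : point V)
  : network {v : V | v \in I} :=
  fun u => [ffun w : {v : V | v \in I} => f (extend y u) (val w)].
Arguments subnetwork {V} f I y _.
Arguments extend {V} I y u.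

From mathcomp Require Import all_boot.
Set Implicit Arguments. Unset Strict Implicit. Unset Printing Implicit Defensive.

(* A collision conjugate f x1 = conjugate f x2 yields an agreeing pair: a != b
   whose conjugate images coincide on the set I of coordinates where a and b
   differ.  Take such a pair with I of least size and let F be the conjugate of
   the subnetwork on I (outside coordinates fixed as in a).  Then F identifies
   the antipodal points a|I and b|I = cpl (a|I), and by minimality F separates
   every non-antipodal pair: some coordinate distinguishes both the points and
   their images.  For such an F the map b |-> (F b with coordinate v replaced by
   b v) is injective, so every edge {t, flip v t} of the cube has exactly two
   preimages in total; fiber sizes therefore alternate as m, 2 - m along edges
   and depend only on parity.  The antipodal collision gives a fiber of size 2,
   so F hits each point of one parity twice, on an antipodal pair, and misses
   the other parity: the subnetwork is even- or odd-self-dual. *)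

Section Cube.
Variable W : finType.
Implicit Types (s t x y : point W) (v : W).

Definition cpl x : point W := pxor x (ones W).
Definition flip v t : point W := [ffun w => if w == v then ~~ t w else t w].
Definition setv v (c : bool) t : point W := [ffun w => if w == v then c else t w].
Definition diffset x y := [set w | x w != y w].
Definition agree_off v s t := [forall (w | w != v), s w == t w].

Lemma cpl_neq v x : cpl x != x.
Proof. by apply/eqP => /ffunP/(_ v); rewrite !ffunE; case: (x v). Qed.

Lemma eq_cpl x y : (y == cpl x) = [forall w, x w != y w].
Proof.
apply/eqP/forallP => [-> w | xy]; first by rewrite !ffunE; case: (x w).
by apply/ffunP => w; move: (xy w); rewrite !ffunE; case: (x w); case: (y w).
Qed.

Lemma flipK v : involutive (flip v).
Proof. by move=> t; apply/ffunP => w; rewrite !ffunE; case: eqP; rewrite ?negbK. Qed.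

Lemma flip_neq v t : flip v t != t.
Proof. by apply/eqP => /ffunP/(_ v); rewrite ffunE eqxx; case: (t v). Qed.

Lemma odd_weight_flip v t : odd (weight (flip v t)) = ~~ odd (weight t).
Proof.
rewrite /weight (cardsD1 v [set w | flip v t w]) (cardsD1 v [set w | t w]).
have -> : [set w | flip v t w] :\ v = [set w | t w] :\ v.
  by apply/setP => w; rewrite !inE !ffunE; case: eqP.
by rewrite !inE ffunE eqxx !oddD; case: (t v) => /=; rewrite ?negbK.
Qed.

Lemma diffset_eq0 x y : (diffset x y == set0) = (x == y).
Proof.
apply/eqP/eqP => [/setP xy | ->]; last by apply/setP => w; rewrite !inE eqxx.
by apply/ffunP => w; move: (xy w); rewrite !inE => /negbFE/eqP.
Qed.

Lemma flip_pair v s t : (s \in [set t; flip v t]) = agree_off v s t.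
Proof.
rewrite !inE; apply/orP/forall_inP => [[] /eqP -> w wv | st].
- by [].
- by rewrite ffunE (negbTE wv).
have [sv | sv] := eqVneq (s v) (t v); [left | right]; apply/eqP/ffunP => w;
  rewrite ?ffunE; have [-> | wv] := eqVneq w v; try exact/eqP/st.
  exact: sv.
by move: sv; case: (s v); case: (t v).
Qed.

Lemma eq_setv v c c' s t :
  (setv v c s == setv v c' t) = (c == c') && agree_off v s t.
Proof.
apply/eqP/andP => [/ffunP st | [/eqP <- /forall_inP st]].
  split; first by move: (st v); rewrite !ffunE eqxx => ->.
  by apply/forall_inP => w wv; move: (st w); rewrite !ffunE (negbTE wv) => ->.
by apply/ffunP => w; rewrite !ffunE; case: eqP => // /eqP wv; exact/eqP/st.
Qed.

Lemma flip_ind (Q : point W -> Prop) r :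
  Q r -> (forall v t, Q t -> Q (flip v t)) -> forall t, Q t.
Proof.
move=> Qr Qflip t; have [k] := ubnP #|diffset t r|; elim: k t => // k IH t.
have [/eqP | /set0Pn [w]] := eqVneq (diffset t r) set0.
  by rewrite diffset_eq0 => /eqP ->.
rewrite inE ltnS => tr lt_k; rewrite -(flipK w t); apply/Qflip/IH.
apply: leq_trans lt_k; rewrite [#|diffset t r|](cardsD1 w) inE tr add1n ltnS.
apply/subset_leq_card/subsetP => u; rewrite !inE !ffunE.
by have [-> | uw] /= := eqVneq u w; move: tr; case: (t w); case: (r w).
Qed.

End Cube.

Definition separating (W : finType) (F : point W -> point W) :=
  forall a b : point W, a != b -> (exists w, a w = b w) ->
    exists2 w, a w != b w & F a w != F b w.

Definition fiber_card (W : finType) (F : point W -> point W) (t : point W) :=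
  #|F @^-1: [set t]|.

Section Separating.
Variables (W : finType) (F : point W -> point W).
Hypothesis F_sep : separating F.
Implicit Types (s t x : point W) (v : W).

Lemma fiber_sub_cpl x : F @^-1: [set F x] \subset [set x; cpl x].
Proof.
apply/subsetP => y; rewrite !inE => /eqP Fxy.
have [// | xy] := eqVneq x y; have [// | ycx] := eqVneq y (cpl x).
move: ycx; rewrite eq_cpl => /forallPn [w /negbNE/eqP xyw].
by have [w' _] := F_sep xy (ex_intro _ w xyw); rewrite Fxy eqxx.
Qed.

Lemma setv_F_inj v : injective (fun b : point W => setv v (b v) (F b)).
Proof.
move=> b1 b2 /eqP; rewrite eq_setv => /andP [/eqP b12v /forall_inP Fb12].
apply/eqP; apply: contraT => b12.
have [w b12w] := F_sep b12 (ex_intro _ v b12v).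
have wv : w != v by apply: contraNneq b12w => ->; rewrite b12v.
by rewrite (eqP (Fb12 w wv)) eqxx.
Qed.

Lemma fiber_card_flip v t : fiber_card F t + fiber_card F (flip v t) = 2.
Proof.
pose Psi (b : point W) := setv v (b v) (F b).
have -> : fiber_card F t + fiber_card F (flip v t) = #|F @^-1: [set t; flip v t]|.
  rewrite /fiber_card -cardsUI -preimsetU -preimsetI.
  have -> : [set t] :&: [set flip v t] = set0.
    apply/setP => s; rewrite !inE; case: eqP => // ->.
    by rewrite eq_sym (negbTE (flip_neq v t)).
  by rewrite preimset0 cards0 addn0.
have -> : F @^-1: [set t; flip v t] = Psi @^-1: [set setv v true t; setv v false t].
  apply/setP => b; rewrite [b \in F @^-1: _]inE flip_pair !inE !eq_setv.
  by case: (b v); rewrite ?orbF.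
by rewrite card_preimset ?cards2 ?eq_setv //; apply: setv_F_inj.
Qed.

Lemma fiber_card_parity r t :
  if odd (weight t) == odd (weight r) then fiber_card F t = fiber_card F r
  else fiber_card F t + fiber_card F r = 2.
Proof.
move: t; apply: (@flip_ind _ _ r); first by rewrite eqxx.
move=> v t; have := fiber_card_flip v t; rewrite odd_weight_flip.
case: (odd (weight t)); case: (odd (weight r)) => //= flip2 Qt.
- by rewrite -Qt addnC.
- by apply/(@addnI (fiber_card F t)); rewrite flip2 Qt.
- by apply/(@addnI (fiber_card F t)); rewrite flip2 Qt.
- by rewrite -Qt addnC.
Qed.

Lemma fiber_card2 v x : (fiber_card F (F x) == 2) = (F (cpl x) == F x).
Proof.
have sub := fiber_sub_cpl x.
have card_pair : #|[set x; cpl x]| = 2 by rewrite cards2 eq_sym (cpl_neq v).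
rewrite /fiber_card -card_pair eqn_leq (subset_leq_card sub) /=.
rewrite -(andTb (_ <= _)) -{1}sub -eqEcard eqEsubset sub /=.
by rewrite subUset !sub1set !inE eqxx.
Qed.

End Separating.

Section Collision.
Variables (W : finType) (F : point W -> point W) (a : point W).
(* [v] only witnesses that [W] is nonempty, so that [cpl x != x]. *)
Variable v : W.
Hypotheses (F_sep : separating F) (F_collision : F (cpl a) = F a).
Implicit Types (t x : point W).

Lemma fiber_card_parity_collision t :
  fiber_card F t = if odd (weight t) == odd (weight (F a)) then 2 else 0.
Proof.
have /eqP card2 : fiber_card F (F a) == 2 by rewrite fiber_card2 // F_collision.
have := fiber_card_parity F_sep (F a) t; rewrite card2.
by case: ifP => // _ /eqP; rewrite -{2}[2]add0n eqn_add2r => /eqP.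
Qed.

Lemma image_parity t : (exists x, F x = t) <-> odd (weight t) = odd (weight (F a)).
Proof.
apply: (iff_trans (_ : _ <-> 0 < fiber_card F t)).
  rewrite /fiber_card card_gt0; split => [[x Fx] | /set0Pn [x]].
    by apply/set0Pn; exists x; rewrite !inE Fx.
  by rewrite !inE => /eqP; exists x.
by rewrite fiber_card_parity_collision; case: eqP.
Qed.

Lemma F_cpl x : F (cpl x) = F x.
Proof.
apply/eqP; rewrite -(fiber_card2 F_sep v) fiber_card_parity_collision.
by have -> := proj1 (image_parity (F x)) (ex_intro _ x erefl); rewrite eqxx.
Qed.

End Collision.

Lemma conjugate_cpl_self_dual (W : finType) (G : network W) :
  (forall x, conjugate G (cpl x) = conjugate G x) -> self_dual G.
Proof.
move=> Gcpl x; apply/ffunP => w; move: (Gcpl x) => /ffunP /(_ w).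
rewrite !ffunE; by case: (G (pxor x (ones W)) w); case: (G x w); case: (x w).
Qed.

Lemma separating_collision_self_dual (W : finType) (G : network W) (v : W) a :
  separating (conjugate G) -> conjugate G (cpl a) = conjugate G a ->
  even_self_dual G \/ odd_self_dual G.
Proof.
move=> G_sep G_collision.
have G_sd := conjugate_cpl_self_dual (F_cpl v G_sep G_collision).
have img := image_parity v G_sep G_collision.
rewrite /even_self_dual /odd_self_dual /even_net /odd_net /even_point /odd_point.
case: (odd _) img => img; [right | left]; split => // p;
  by apply: (iff_trans (img p)); case: (odd _); split.
Qed.

Definition agreeing (W : finType) (F : point W -> point W) (a b : point W) :=
  (a != b) && [forall w in diffset a b, F a w == F b w].

Lemma minimal_agreeing_pair (W : finType) (F : point W -> point W) a0 b0 :
  agreeing F a0 b0 ->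
  exists a b, agreeing F a b /\
    forall a' b', agreeing F a' b' -> #|diffset a b| <= #|diffset a' b'|.
Proof.
move=> ab0; pose P (ab : point W * point W) := agreeing F ab.1 ab.2.
case: (@arg_minnP _ (a0, b0) P (fun ab => #|diffset ab.1 ab.2|) ab0).
by move=> [a b] ab ab_min; exists a, b; split => // a' b'; apply: (ab_min (a', b')).
Qed.

Section Extend.
Variables (V : finType) (I : {set V}) (y : point V).
Implicit Types u : point {v : V | v \in I}.

Definition restrict (x : point V) : point {v : V | v \in I} := [ffun w => x (val w)].

Lemma extend_in u v (vI : v \in I) : extend I y u v = u (Sub v vI).
Proof. by rewrite ffunE insubT. Qed.

Lemma extend_out u v : v \notin I -> extend I y u v = y v.
Proof. by move=> vI; rewrite ffunE insubN. Qed.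

Lemma extend_restrict : extend I y (restrict y) = y.
Proof.
apply/ffunP => v; have [vI | vI] := boolP (v \in I); last exact: extend_out.
by rewrite (extend_in _ vI) ffunE.
Qed.

Lemma diffset_extend u1 u2 :
  diffset (extend I y u1) (extend I y u2) = val @: diffset u1 u2.
Proof.
apply/setP => v; rewrite inE; have [vI | vI] := boolP (v \in I).
  rewrite !(extend_in _ vI); apply/idP/imsetP => [u12 | [w]].
    by exists (Sub v vI); rewrite ?inE.
  by rewrite inE => u12 vw; have -> : Sub v vI = w by apply: val_inj; rewrite SubK.
rewrite !extend_out // eqxx; apply/esym/imsetP => [[w _ vw]].
by move: vI; rewrite vw (valP w).
Qed.

Lemma conjugate_subnetwork (f : network V) u w :
  conjugate (subnetwork f I y) u w = conjugate f (extend I y u) (val w).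
Proof. by rewrite !ffunE valK. Qed.

End Extend.

Section MinimalAgreeingPair.
Variables (V : finType) (f : network V) (a b : point V).
Hypothesis ab_agree : agreeing (conjugate f) a b.
Hypothesis ab_min :
  forall a' b', agreeing (conjugate f) a' b' -> #|diffset a b| <= #|diffset a' b'|.
Local Notation I := (diffset a b).
Local Notation G := (subnetwork f I a).

Lemma extend_cpl_restrict : extend I a (cpl (restrict I a)) = b.
Proof.
apply/ffunP => v; have [vI | vI] := boolP (v \in I); last first.
  by rewrite extend_out //; move: vI; rewrite inE negbK => /eqP.
rewrite (extend_in a _ vI) !ffunE /=.
by move: vI; rewrite inE; case: (a v); case: (b v).
Qed.

Lemma subnetwork_collision :
  conjugate G (cpl (restrict I a)) = conjugate G (restrict I a).
Proof.
case/andP: ab_agree => _ /forall_inP Fab.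
apply/ffunP => w; rewrite !conjugate_subnetwork extend_cpl_restrict extend_restrict.
by apply/esym/eqP/Fab/(valP w).
Qed.

Lemma subnetwork_separating : separating (conjugate G).
Proof.
move=> u1 u2 u12 [w0 u12w0].
have lt_I : #|diffset u1 u2| < #|I|.
  have : diffset u1 u2 \proper setT.
    by rewrite properT; apply/eqP => /setP/(_ w0); rewrite !inE u12w0 eqxx.
  by move/proper_card; rewrite cardsT card_sig.
have ext12 : extend I a u1 != extend I a u2.
  by rewrite -diffset_eq0 diffset_extend imset_eq0 diffset_eq0.
have : ~~ agreeing (conjugate f) (extend I a u1) (extend I a u2).
  apply: contraTN lt_I => /ab_min.
  by rewrite diffset_extend (card_imset _ val_inj) leqNgt.
rewrite /agreeing ext12 => /forall_inPn [v].
rewrite diffset_extend => /imsetP [w uw ->].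
exists w; first by move: uw; rewrite inE.
by rewrite (conjugate_subnetwork a f u1) (conjugate_subnetwork a f u2).
Qed.

End MinimalAgreeingPair.

Theorem theorem8 (V : finType) (HV : 0 < #|V|) (f : network V) :
  (forall (I : {set V}) (y : point V), I != set0 ->
     ~ even_self_dual (subnetwork f I y) /\ ~ odd_self_dual (subnetwork f I y)) ->
  bijective (conjugate f).
Proof.
move=> no_sd; apply: injF_bij => x1 x2 E; apply/eqP; apply: contraT => x12.
have x12_agree : agreeing (conjugate f) x1 x2.
  by rewrite /agreeing x12; apply/forall_inP => w _; rewrite E.
have [a [b [ab_agree ab_min]]] := minimal_agreeing_pair x12_agree.
have I0 : diffset a b != set0 by rewrite diffset_eq0; case/andP: ab_agree.
have /set0Pn [v vI] := I0.
have [not_even not_odd] := no_sd _ a I0.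
by case: (separating_collision_self_dual (Sub v vI)
  (subnetwork_separating ab_min) (subnetwork_collision ab_agree)).
Qed.
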